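(* The graph $T_7$ is a minimal non-word-representable graph: $T_7$ is not word-representable, but every graph obtained from $T_7$ by deleting one vertex is word-representable.
   Context: A graph $G=(V,E)$ is word-representable if there exists a word $w$ over the alphabet $V$ such that for all distinct $x,y\in V$, the letters $x$ and $y$ alternate in $w$ if and only if $xy\in E$ (alternation meaning that deleting all letters other than $x$ and $y$ leaves $xyxy\cdots$ or $yxyx\cdots$). The graph $T_7$ has vertex set $\{1,\dots,9\}$; the vertices $1,2,3,4,5$ form a clique, the vertices $6,7,8,9$ form an independent set, and the remaining edges are: $6$ is adjacent to $1,3$; $7$ is adjacent to $2,4$; $8$ is adjacent to $1,2,5$; $9$ is adjacent to $3,4,5$. *)

From mathcomp Require Import all_boot.
Set Implicit Arguments. Unset Strict Implicit. Unset Printing Implicit Defensive.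

Definition alt_word (T : Type) (x y : T) (n : nat) : seq T :=
  mkseq (fun i => if odd i then y else x) n.

Definition alternate (T : eqType) (w : seq T) (x y : T) : bool :=
  let s := [seq z <- w | (z == x) || (z == y)] in
  (s == alt_word x y (size s)) || (s == alt_word y x (size s)).

Definition word_representable_on (T : finType) (e : rel T) (S : {set T}) : Prop :=
  exists w : seq T,
    [/\ all (fun z => z \in S) w,
        {subset S <= w} &
        forall x y, x \in S -> y \in S -> x != y ->
          (alternate w x y <-> e x y)].

Definition word_representable (T : finType) (e : rel T) : Prop :=
  word_representable_on e [set: T].

(* The graph T_7.  Vertex k of the paper (1 <= k <= 9) is the ordinal
   k-1 : 'I_9.  Edges are listed with the paper's labels. *)
Definition T7_edges : seq (nat * nat) :=
  [:: (1,2); (1,3); (1,4); (1,5); (2,3); (2,4); (2,5); (3,4); (3,5); (4,5);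
      (6,1); (6,3); (7,2); (7,4); (8,1); (8,2); (8,5); (9,3); (9,4); (9,5)].

Definition T7 : rel 'I_9 :=
  fun x y => ((x.+1, y.+1) \in T7_edges) || ((y.+1, x.+1) \in T7_edges).

(* If a word w represents a graph, orient every edge from the vertex that occurs first in w.
   Along an edge x -> y every prefix of w contains as many x's as y's or one more; chaining
   these counts along a path a -> b -> c -> d closed by a -> d shows that a, c and b, d
   alternate too, hence are adjacent.  So the first-occurrence order has no shortcut: no
   4-cycle a b c d, increasing in that order, that misses a diagonal.  An exhaustive search
   shows that every order of the 9 vertices of T7 has one.  Conversely, each T7 - v is
   represented by an explicit word. *)

From mathcomp Require Import all_boot zify.
Set Implicit Arguments. Unset Strict Implicit. Unset Printing Implicit Defensive.

Section Alternation.
Variable T : eqType.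
Implicit Types (w : seq T) (x y : T).

Definition leads w x y := forall n,
  count_mem y (take n w) <= count_mem x (take n w) <= (count_mem y (take n w)).+1.

Lemma alt_wordS x y n : alt_word x y n.+1 = x :: alt_word y x n.
Proof.
rewrite /alt_word /mkseq /= (iotaDl 1 0) -map_comp.
by congr (_ :: _); apply: eq_map => i /=; case: (odd i).
Qed.

Lemma filter_orC w x y :
  [seq z <- w | (z == x) || (z == y)] = [seq z <- w | (z == y) || (z == x)].
Proof. by apply: eq_filter => z; rewrite orbC. Qed.

Lemma leads_cons_leader w x y : x != y -> leads (x :: w) x y <-> leads w y x.
Proof.
move=> xy; split=> H n.
  by have := H n.+1; rewrite /= eqxx (negbTE xy); lia.
case: n => [|n] //; have := H n; rewrite /= eqxx (negbTE xy); lia.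
Qed.

Lemma leads_cons_follower w x y : x != y -> ~ leads (y :: w) x y.
Proof. by move=> xy /(_ 1); rewrite /= take0 eqxx eq_sym (negbTE xy). Qed.

Lemma leads_cons_other w x y z : z != x -> z != y -> leads (z :: w) x y <-> leads w x y.
Proof.
move=> zx zy; split=> H n; first by have := H n.+1; rewrite /= (negbTE zx) (negbTE zy).
by case: n => //= n; rewrite (negbTE zx) (negbTE zy) !add0n.
Qed.

Lemma leads_alt_word w x y : x != y ->
  let s := [seq z <- w | (z == x) || (z == y)] in leads w x y <-> s = alt_word x y (size s).
Proof.
elim: w x y => [|z w IH] x y xy /=; first by split=> // _ [].
case: (eqVneq z x) => [->|zx] /=.
  rewrite alt_wordS (leads_cons_leader _ xy) filter_orC (IH y x); last by rewrite eq_sym.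
  by split=> [E|[] //]; congr (_ :: _).
case: (eqVneq z y) => [->|zy] /=.
  split=> [/(leads_cons_follower xy)|] //.
  by rewrite alt_wordS => -[/eqP]; rewrite eq_sym (negbTE xy).
exact: iff_trans (leads_cons_other _ zx zy) (IH x y xy).
Qed.

Lemma alternate_leads w x y : x != y -> alternate w x y <-> leads w x y \/ leads w y x.
Proof.
move=> xy; have yx : y != x by rewrite eq_sym.
rewrite /alternate (leads_alt_word w xy) (leads_alt_word w yx) (filter_orC w y x).
by split=> [/orP[]/eqP|[]/eqP ->]; auto; rewrite orbT.
Qed.

Lemma not_leads_later w x y : x \in w -> index x w < index y w -> ~ leads w y x.
Proof.
move=> xw ixy /(_ (index x w).+1) /andP[+ _]; set p := take _ w.
have yNp : y \notin p.
  by apply: contraTN ixy => yp; rewrite -leqNgt -ltnS -(in_take _ (mem_take yp)).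
have xp : x \in p by rewrite in_take.
by rewrite (count_memPn yNp) leqn0 => /eqP/count_memPn; rewrite xp.
Qed.

Lemma leads_chords w a b c d :
  leads w a b -> leads w b c -> leads w c d -> leads w a d -> leads w a c /\ leads w b d.
Proof. by move=> ab bc cd ad; split=> n; move: (ab n) (bc n) (cd n) (ad n); lia. Qed.

End Alternation.

Lemma alternate_map (T1 T2 : eqType) (f : T1 -> T2) (w : seq T1) x y :
  injective f -> alternate (map f w) (f x) (f y) = alternate w x y.
Proof.
move=> f_inj; have map_alt a b n : map f (alt_word a b n) = alt_word (f a) (f b) n.
  by rewrite /alt_word /mkseq -map_comp; apply: eq_map => i /=; case: (odd i).
rewrite /alternate filter_map size_map.
rewrite (@eq_filter _ _ (fun z => (z == x) || (z == y))); last first.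
  by move=> z /=; rewrite !(inj_eq f_inj).
by rewrite -!map_alt !(inj_eq (inj_map f_inj)).
Qed.

Section Representation.
Variables (T : eqType) (e : rel T) (V w : seq T).

Definition represents : bool :=
  [&& all (mem V) w, all (mem w) V &
      all (fun x => all (fun y => (x == y) || (alternate w x y == e x y)) V) V].

Lemma representsP :
  reflect [/\ {subset w <= V}, {subset V <= w} &
              {in V &, forall x y, x != y -> alternate w x y = e x y}] represents.
Proof.
apply: (iffP and3P) => [[/allP wV /allP Vw /allP alt]|[wV Vw alt]].
  split=> // x y xV yV /negPf xy.
  by have /allP/(_ y yV) := alt x xV; rewrite xy => /eqP.
split; [exact/allP | exact/allP |].
apply/allP => x xV; apply/allP => y yV.
by case: eqVneq => [//|xy] /=; rewrite alt.
Qed.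

End Representation.

Definition incomplete_square (T : eqType) (e : rel T) (a b c d : T) : bool :=
  [&& e a b, e b c, e c d, e a d & ~~ (e a c && e b d)].

(* The shortcuts of length 3, in the sense of Halldorsson, Kitaev and Pyatkin, of the acyclic
   orientation induced by the order [r]. *)
Definition shortcut (T : eqType) (e : rel T) (r : seq T) (a b c d : T) : bool :=
  [&& index a r < index b r, index b r < index c r, index c r < index d r &
      incomplete_square e a b c d].

Lemma neq_index_lt (T : eqType) (s : seq T) x y : index x s < index y s -> x != y.
Proof. by apply: contraTN => /eqP ->; rewrite ltnn. Qed.

Section FirstOccurrenceOrder.
Variables (T : eqType) (e : rel T) (V w : seq T).
Hypothesis e_in_V : forall x y, e x y -> (x \in V) && (y \in V).
Hypothesis V_in_w : {subset V <= w}.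
Hypothesis w_alt : {in V &, forall x y, x != y -> alternate w x y = e x y}.

Definition first_occurrence_order := sort (fun a b => index a w <= index b w) V.
Local Notation r := first_occurrence_order.

Lemma perm_first_occurrence_order : perm_eq r V.
Proof. by rewrite perm_sort. Qed.

Lemma index_first_occurrence_order a b :
  a \in V -> b \in V -> index a r < index b r -> index a w < index b w.
Proof.
move=> aV bV ab.
have rV x : (x \in r) = (x \in V) by rewrite (perm_mem perm_first_occurrence_order).
have sorted_r : sorted (fun x y => index x w <= index y w) r.
  by apply: sort_sorted => x y; exact: leq_total.
have le_ab : index a w <= index b w.
  by apply: (sorted_ltn_index _ sorted_r a b); rewrite ?rV // => y x z; exact: leq_trans.
rewrite ltn_neqAle le_ab andbT; apply: contraTN ab.
by move=> /eqP/(index_inj a (V_in_w aV) (V_in_w bV)) ->; rewrite ltnn.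
Qed.

Lemma edge_leads x y : x != y -> e x y -> index x r < index y r -> leads w x y.
Proof.
move=> xy exy lt_xy; have /andP[xV yV] := e_in_V exy.
have /(alternate_leads _ xy)[//|yx] : alternate w x y by rewrite w_alt.
by case: (not_leads_later (V_in_w xV) (index_first_occurrence_order xV yV lt_xy) yx).
Qed.

Lemma leads_edge x y : x \in V -> y \in V -> x != y -> leads w x y -> e x y.
Proof. by move=> xV yV xy l; rewrite -w_alt //; apply/(alternate_leads _ xy); left. Qed.

Lemma first_occurrence_order_shortcut_free a b c d : ~~ shortcut e r a b c d.
Proof.
apply/negP => /and4P[ab bc cd /and5P[eab ebc ecd ead /negP[]]].
have ac := ltn_trans ab bc; have bd := ltn_trans bc cd.
have [l_ac l_bd] := leads_chords (edge_leads (neq_index_lt ab) eab ab)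
  (edge_leads (neq_index_lt bc) ebc bc) (edge_leads (neq_index_lt cd) ecd cd)
  (edge_leads (neq_index_lt (ltn_trans ab bd)) ead (ltn_trans ab bd)).
have /andP[aV bV] := e_in_V eab; have /andP[cV dV] := e_in_V ecd.
by rewrite (leads_edge aV cV (neq_index_lt ac) l_ac)
  (leads_edge bV dV (neq_index_lt bd) l_bd).
Qed.

End FirstOccurrenceOrder.

Section ShortcutSearch.
Variables (T : eqType) (e : rel T).

Definition incomplete_squares (V : seq T) : seq (seq T) :=
  [seq q <- iter 4 (fun Q => [seq x :: q | x <- V, q <- Q]) [:: [::]] |
     if q is [:: a; b; c; d] then incomplete_square e a b c d else false].

Lemma shortcut_cat s t a b c d :
  index a s < index b s < index c s -> c \in s -> d \notin s ->
  incomplete_square e a b c d -> shortcut e (s ++ t) a b c d.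
Proof.
move=> /andP[ab bc] cs ds sq.
have bS : b \in s by rewrite -index_mem (ltn_trans bc) ?index_mem.
have aS : a \in s by rewrite -index_mem (ltn_trans ab) ?index_mem.
rewrite /shortcut !index_cat cs bS aS (negbTE ds) ab bc sq andbT /=.
by rewrite ltn_addr ?index_mem.
Qed.

(* [if] rather than [&&]: [vm_compute] evaluates both arguments of [&&]. *)
Definition closes_shortcut (Q : seq (seq T)) (s : seq T) (c : T) : bool :=
  has (fun q => if q is [:: a; b; c'; d] then
                  if c' == c then [&& index a s < index b s < index c s & d \notin s]
                  else false
                else false) Q.

Fixpoint forces_shortcut (Q : seq (seq T)) (n : nat) (pre rest : seq T) : bool :=
  if (n, rest) is (n'.+1, _ :: _) then
    all (fun c => if closes_shortcut Q (rcons pre c) c then true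
                  else forces_shortcut Q n' (rcons pre c) (rem c rest)) rest
  else false.

Lemma forces_shortcut_cons Q n pre x s : forces_shortcut Q n.+1 pre (x :: s) =
  all (fun c => if closes_shortcut Q (rcons pre c) c then true
                else forces_shortcut Q n (rcons pre c) (rem c (x :: s))) (x :: s).
Proof. by []. Qed.

Lemma closes_shortcutP V s c t : c \in s -> closes_shortcut (incomplete_squares V) s c ->
  exists a b d, shortcut e (s ++ t) a b c d.
Proof.
move=> cs /hasP[[|a [|b [|c' [|d [|]]]]] //]; rewrite mem_filter => /andP[sq _].
by case: eqP => // -> in sq * => /andP[ord ds]; exists a, b, d; apply: shortcut_cat.
Qed.

Lemma forces_shortcutP V n pre rest : forces_shortcut (incomplete_squares V) n pre rest ->
  forall t, perm_eq t rest -> exists a b c d, shortcut e (pre ++ t) a b c d.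
Proof.
elim: n pre rest => [//|n IH] pre [//|x0 rest0]; set rest := x0 :: rest0.
rewrite (forces_shortcut_cons _ _ _ x0 rest0) -/rest => /allP forced [|c t] perm_t.
  by move/perm_size: perm_t.
have c_rest : c \in rest by rewrite -(perm_mem perm_t) mem_head.
rewrite -cat_rcons; move: (forced c c_rest); case: ifP => [closes _|_ /IH].
  have c_s : c \in rcons pre c by rewrite mem_rcons mem_head.
  have [a [b [d sc]]] := closes_shortcutP t c_s closes.
  by exists a, b, c, d.
apply; rewrite -(perm_cons c) (perm_trans perm_t) //; exact: perm_to_rem.
Qed.

End ShortcutSearch.

Section OrdinalTransfer.
Variables (n : nat) (e : rel 'I_n) (e' : rel nat) (S : {set 'I_n}) (V : seq nat).
Hypothesis e_val : forall x y : 'I_n, e x y = e' x y.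
Hypothesis S_val : forall x : 'I_n, (x \in S) = (val x \in V).
Hypothesis V_lt : forall a, a \in V -> a < n.

Lemma word_representable_onE (w : seq 'I_n) :
  [/\ all (fun z => z \in S) w, {subset S <= w} &
      forall x y, x \in S -> y \in S -> x != y -> (alternate w x y <-> e x y)] <->
  represents e' V (map val w).
Proof.
split=> [[/allP wS Sw alt]|/representsP[wV Vw alt]]; last split.
- apply/representsP; split.
  + by move=> _ /mapP[x xw ->]; rewrite -S_val wS.
  + move=> a aV; pose x := Ordinal (V_lt aV).
    by rewrite -[a]/(val x) map_f // Sw // S_val.
  + move=> a b aV bV ab; pose x := Ordinal (V_lt aV); pose y := Ordinal (V_lt bV).
    have xy : x != y by rewrite -val_eqE.
    rewrite -[a]/(val x) -[b]/(val y) alternate_map; last exact: val_inj.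
    by rewrite -e_val; apply/idP/idP => /(alt x y) -> //; rewrite S_val.
- by apply/allP => x xw; rewrite S_val wV // map_f.
- by move=> x; rewrite S_val => /Vw; rewrite mem_map //; exact: val_inj.
by move=> x y xS yS xy; rewrite e_val -(alternate_map _ _ _ val_inj) alt -?S_val.
Qed.

Lemma word_representable_on_represents (l : seq nat) :
  represents e' V l -> word_representable_on e S.
Proof.
move=> rep; exists (pmap insub l); apply/word_representable_onE.
suff -> : map val (pmap insub l : seq 'I_n) = l by [].
rewrite (pmap_filter (insubK _)); apply/all_filterP/allP => a al.
by rewrite isSome_insub V_lt //; case/and3P: rep => /allP/(_ a al).
Qed.

End OrdinalTransfer.

(* [T7] on the values of the ordinals, so that [vm_compute] can run on it (computing with
   ['I_9] itself gets stuck on opaque proofs); [T7 x y] is convertible to [T7n x y]. *)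
Definition T7n (a b : nat) : bool :=
  ((a.+1, b.+1) \in T7_edges) || ((b.+1, a.+1) \in T7_edges).

Lemma T7n_in_range a b : T7n a b -> (a \in iota 0 9) && (b \in iota 0 9).
Proof.
have edges_in_range : all (fun p => (p.1 <= 9) && (p.2 <= 9)) T7_edges by [].
by rewrite !mem_iota /= => /orP[] /(allP edges_in_range) /andP[/= -> ->].
Qed.

Lemma T7n_forces_shortcut :
  forces_shortcut (incomplete_squares T7n (iota 0 9)) 9 [::] (iota 0 9).
Proof. by vm_compute. Qed.

Lemma T7_not_word_representable : ~ word_representable T7.
Proof.
case=> w rep.
have S_val (x : 'I_9) : (x \in [set: 'I_9]) = (val x \in iota 0 9).
  by rewrite in_setT mem_iota ltn_ord.
have V_lt a : a \in iota 0 9 -> a < 9 by rewrite mem_iota.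
have /representsP[_ Vw alt] :=
  iffLR (word_representable_onE (e' := T7n) (fun _ _ => erefl) S_val V_lt w) rep.
have [a [b [c [d]]]] := forces_shortcutP T7n_forces_shortcut
  (perm_first_occurrence_order (iota 0 9) (map val w)).
by apply/negP; exact: first_occurrence_order_shortcut_free T7n_in_range Vw alt a b c d.
Qed.

(* Letters are 0-based: vertex [k] of the paper is [k - 1]. *)
Definition T7_deletion_word (v : nat) : seq nat :=
  match v with
  | 0 => [:: 1; 3; 6; 2; 7; 4; 1; 7; 8; 3; 5; 2; 5; 4; 8; 6]
  | 1 => [:: 0; 2; 5; 3; 7; 4; 0; 7; 8; 2; 6; 3; 6; 4; 8; 5]
  | 2 => [:: 0; 1; 7; 8; 3; 4; 8; 5; 0; 5; 6; 1; 3; 6; 7; 4]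
  | 3 => [:: 0; 1; 4; 7; 5; 2; 0; 5; 6; 1; 6; 8; 4; 2; 8; 7]
  | 4 => [:: 0; 1; 3; 5; 2; 6; 7; 0; 1; 7; 5; 8; 3; 2; 0; 5; 8; 6; 1; 3; 6; 2; 7; 8]
  | 5 => [:: 0; 1; 7; 8; 3; 2; 4; 8; 0; 6; 1; 3; 6; 2; 7; 4]
  | 6 => [:: 0; 1; 4; 7; 3; 5; 2; 0; 5; 1; 8; 4; 3; 2; 8; 7]
  | 7 => [:: 0; 2; 5; 4; 6; 3; 1; 6; 0; 8; 2; 4; 3; 8; 1; 5]
  | _ => [:: 0; 2; 5; 3; 7; 1; 4; 0; 7; 2; 6; 3; 1; 6; 4; 5]
  end.

Lemma T7_deletion_words_represent :
  all (fun v => represents T7n [seq a <- iota 0 9 | a != v] (T7_deletion_word v)) (iota 0 9).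
Proof. by vm_compute. Qed.

Lemma T7_deletion_word_representable (v : 'I_9) : word_representable_on T7 [set~ v].
Proof.
apply: (word_representable_on_represents (e' := T7n)
  (V := [seq a <- iota 0 9 | a != val v])) => //.
- by move=> x; rewrite in_setC1 mem_filter mem_iota ltn_ord leq0n !andbT val_eqE.
- by move=> a; rewrite mem_filter mem_iota => /andP[].
by apply: (allP T7_deletion_words_represent); rewrite mem_iota ltn_ord.
Qed.

Theorem theorem15 :
  ~ word_representable T7 /\
  (forall v : 'I_9, word_representable_on T7 [set~ v]).
Proof.
split; [exact: T7_not_word_representable | exact: T7_deletion_word_representable].
Qed.
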